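(* Fix constants $0<C_1\le C_2$, an integer $K\ge1$, and constants $C,\delta>0$. Let $G=(V,E)$ be a proper graph on $n$ vertices and $N=(G,c)$ an electrical network with $C_1\le c_{ij}\le C_2$ for all $(i,j)\in E$. Let $\Gamma=\{x_1,\dots,x_K\}\subset V$ be distinct boundary vertices with boundary potentials $V_{x_k}=p_{x_k}$, $0\le p_{x_k}\le 1$, $k=1,\dots,K$. Then the potential distribution satisfies \[ V_i=\frac{\sum_{k=1}^K p_{x_k}c_{x_k}}{\sum_{k=1}^K c_{x_k}}+O\big((\ln n)^{-1}\big)\qquad\text{for each } i\in V\setminus\Gamma, \] where the implied constant depends only on $C_1,C_2,K,C,\delta$.
   Context: An electrical network $N=(G,c)$ on a simple graph $G=(V,E)$ assigns a conductance $c_{ij}=c_{ji}>0$ to each edge $(i,j)\in E$; write $c_i=\sum_{j:(i,j)\in E}c_{ij}$. Given a boundary set $\Gamma\subset V$ with prescribed values on $\Gamma$, the potential distribution is the function $V:V\to\mathbb{R}$ taking the prescribed values on $\Gamma$ and satisfying $\sum_{j:(i,j)\in E}c_{ij}(V_i-V_j)=0$ (i.e. $V_i=\sum_{j:(i,j)\in E}\frac{c_{ij}}{c_i}V_j$) for every $i\in V\setminus\Gamma$. Let $G=(V,E)$ be a simple graph on $n$ vertices and let $0<C_1\le C_2$, $K\ge 1$, $C>0$, $\delta>0$ be constants. $G$ is called proper if: (P1) $G$ is connected. (P2) Calling a cycle short if its length is at most $\frac{\ln n}{10\ln\ln n}$, any two distinct short cycles are at distance at least $\frac{\ln n}{\ln\ln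 n}$. (P3) $G$ contains at least one cycle of length 3, one of length 5, and one of length 7. (P4) For every conductance assignment $c$ on $E$ with $C_1\le c_{ij}\le C_2$ for all $(i,j)\in E$, every $L\subset V$ with $|L|\le K$, and every nonempty $S\subset V\setminus L$ with $|S|\le n/2$, writing $G'=G[V\setminus L]=(V',E')$, $\bar S=V\setminus(L\cup S)$, $E_{G'}(S,\bar S)$ for the set of edges of $G'$ with one end in $S$ and the other in $\bar S$, and $c'_i=\sum_{j:(i,j)\in E'}c_{ij}$, one has $\dfrac{\sum_{(i,j)\in E_{G'}(S,\bar S)}c_{ij}}{\sum_{i\in S}c'_i}\ge \dfrac{C_1}{6C_2}$. (P5) Every vertex $i\in V$ has degree $d(i)$ satisfying $\delta C\ln n< d(i)<4C\ln n$. Asymptotic notation refers to $n\to\infty$. *)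

From Stdlib Require Import Reals List Arith Bool.
Import ListNotations.
Open Scope R_scope.

Definition simple_graph (n : nat) (adj : nat -> nat -> bool) : Prop :=
  (forall i j, adj i j = adj j i) /\
  (forall i, adj i i = false) /\
  (forall i j, adj i j = true -> (i < n)%nat /\ (j < n)%nat).

Definition sumV (n : nat) (f : nat -> R) : R :=
  fold_right Rplus 0 (map f (seq 0 n)).

Definition card (n : nat) (P : nat -> bool) : nat :=
  length (filter P (seq 0 n)).

Definition degree (n : nat) (adj : nat -> nat -> bool) (i : nat) : nat :=
  card n (adj i).

Definition conductance (adj : nat -> nat -> bool) (C1 C2 : R) (c : nat -> nat -> R) : Prop :=
  (forall i j, c i j = c j i) /\
  (forall i j, adj i j = true -> C1 <= c i j <= C2).

(* c_i = sum of conductances of edges at i. *)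
Definition ctot (n : nat) (adj : nat -> nat -> bool) (c : nat -> nat -> R) (i : nat) : R :=
  sumV n (fun j => if adj i j then c i j else 0).

Fixpoint chain (adj : nat -> nat -> bool) (l : list nat) : Prop :=
  match l with
  | a :: ((b :: _) as t) => adj a b = true /\ chain adj t
  | _ => True
  end.

Definition walk (adj : nat -> nat -> bool) (u v : nat) (k : nat) (w : list nat) : Prop :=
  chain adj w /\ hd_error w = Some u /\ last w u = v /\ length w = S k.

Definition connected (n : nat) (adj : nat -> nat -> bool) : Prop :=
  forall u v, (u < n)%nat -> (v < n)%nat -> exists k w, walk adj u v k w.

Definition is_cycle (adj : nat -> nat -> bool) (l : list nat) : Prop :=
  (3 <= length l)%nat /\ NoDup l /\ chain adj l /\ adj (last l 0%nat) (hd 0%nat l) = true.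

Definition cyc_pairs (l : list nat) : list (nat * nat) :=
  combine l (tl l ++ [hd 0%nat l]).

Definition cyc_edge (l : list nat) (u v : nat) : Prop :=
  In (u, v) (cyc_pairs l) \/ In (v, u) (cyc_pairs l).

Definition distinct_cycles (l1 l2 : list nat) : Prop :=
  exists u v, ~ (cyc_edge l1 u v <-> cyc_edge l2 u v).

Definition cycles_far (adj : nat -> nat -> bool) (l1 l2 : list nat) (D : R) : Prop :=
  forall u w k p, In u l1 -> In w l2 -> walk adj u w k p -> D <= INR k.

Definition short_cycle (n : nat) (adj : nat -> nat -> bool) (l : list nat) : Prop :=
  is_cycle adj l /\ INR (length l) <= ln (INR n) / (10 * ln (ln (INR n))).

Definition P4 (n : nat) (adj : nat -> nat -> bool) (C1 C2 : R) (K : nat) : Prop :=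
  forall (c : nat -> nat -> R) (L S : nat -> bool),
    conductance adj C1 C2 c ->
    (forall i, L i = true -> (i < n)%nat) ->
    (card n L <= K)%nat ->
    (forall i, S i = true -> (i < n)%nat /\ L i = false) ->
    (exists i, S i = true) ->
    INR (card n S) <= INR n / 2 ->
    let Sbar := fun j => Nat.ltb j n && negb (L j) && negb (S j) in
    let cut := sumV n (fun i => if S i then
                 sumV n (fun j => if adj i j && Sbar j then c i j else 0) else 0) in
    let vol := sumV n (fun i => if S i then
                 sumV n (fun j => if adj i j && negb (L j) then c i j else 0) else 0) in
    cut / vol >= C1 / (6 * C2).

Definition proper (n : nat) (adj : nat -> nat -> bool)
    (C1 C2 : R) (K : nat) (C delta : R) : Prop :=
  simple_graph n adj /\
  connected n adj /\
  (forall l1 l2, short_cycle n adj l1 -> short_cycle n adj l2 ->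
              distinct_cycles l1 l2 -> cycles_far adj l1 l2 (ln (INR n) / ln (ln (INR n)))) /\
  (exists l3 l5 l7, is_cycle adj l3 /\ length l3 = 3%nat /\
              is_cycle adj l5 /\ length l5 = 5%nat /\
              is_cycle adj l7 /\ length l7 = 7%nat) /\
  P4 n adj C1 C2 K /\
  (forall i, (i < n)%nat ->
              delta * C * ln (INR n) < INR (degree n adj i) < 4 * C * ln (INR n)).

Definition harmonic_off (n : nat) (adj : nat -> nat -> bool) (c : nat -> nat -> R)
    (inGamma : nat -> Prop) (V : nat -> R) : Prop :=
  forall i, (i < n)%nat -> ~ inGamma i ->
    sumV n (fun j => if adj i j then c i j * (V i - V j) else 0) = 0.

Definition sumK (K : nat) (f : nat -> R) : R := fold_right Rplus 0 (map f (seq 0 K)).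

(* Write lam = ln n, Gamma for the boundary and m for a median of V off Gamma.
   The proof has four quantitative ingredients, developed in this order:
   1. Maximum principle: 0 <= V <= 1 on all vertices.
   2. Energy: by the Dirichlet principle the energy of V is at most the energy
      of the function equal to V on Gamma and 0 elsewhere, i.e. O(lam).
   3. Poincare inequality: the expansion property (P4) of G - Gamma yields,
      through a co-area (layer-cake) argument and a median, the bound
      sum_l (V_l - m)^2 * deg_l = O(energy); as degrees are Theta(lam) (P5),
      sum_l (V_l - m)^2 = O(1).
   4. Two-step averaging: V_u - m is a two-step average of the V_l - m.  By
      (P2) two vertices have at most two common neighbours, so the two-step
      transition weights are O(1/lam^2) except the return weight O(1/lam);
      Cauchy-Schwarz with step 3 gives |V_u - m| = O(1/lam) off Gamma.
   Finally the total current leaving Gamma vanishes; expanding it at each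
   boundary vertex shows that m is within O(1/lam) of the weighted average
   sum_k p_k c_{x_k} / sum_k c_{x_k}, which proves the theorem. *)

From Stdlib Require Import Reals List Arith.
From Stdlib Require Import Lra Lia Psatz Classical Bool.
Import ListNotations.
Open Scope R_scope.

Lemma fold_right_Rplus_acc (l : list R) a :
  fold_right Rplus a l = fold_right Rplus 0 l + a.
Proof. induction l; simpl; [lra | rewrite IHl; lra]. Qed.

Lemma sumV_0 f : sumV 0 f = 0.
Proof. reflexivity. Qed.

Lemma sumV_S n f : sumV (S n) f = sumV n f + f n.
Proof.
  unfold sumV. rewrite seq_S, map_app, fold_right_app. simpl.
  rewrite fold_right_Rplus_acc. lra.
Qed.

Lemma sumV_ext n f g : (forall i, (i < n)%nat -> f i = g i) -> sumV n f = sumV n g.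
Proof. induction n; intros H; [reflexivity |]. rewrite !sumV_S, IHn, H; auto. Qed.

Lemma sumV_le n f g : (forall i, (i < n)%nat -> f i <= g i) -> sumV n f <= sumV n g.
Proof.
  induction n; intros H; [rewrite !sumV_0; lra |]. rewrite !sumV_S.
  assert (f n <= g n) by (apply H; lia).
  assert (sumV n f <= sumV n g) by (apply IHn; intros; apply H; lia). lra.
Qed.

Lemma sumV_plus n f g : sumV n (fun i => f i + g i) = sumV n f + sumV n g.
Proof. induction n; [rewrite !sumV_0; lra |]. rewrite !sumV_S, IHn. lra. Qed.

Lemma sumV_minus n f g : sumV n (fun i => f i - g i) = sumV n f - sumV n g.
Proof. induction n; [rewrite !sumV_0; lra |]. rewrite !sumV_S, IHn. lra. Qed.

Lemma sumV_scal n r f : sumV n (fun i => r * f i) = r * sumV n f.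
Proof. induction n; [rewrite !sumV_0; lra |]. rewrite !sumV_S, IHn. lra. Qed.

Lemma sumV_const n r : sumV n (fun _ => r) = INR n * r.
Proof. induction n; [rewrite sumV_0; simpl; lra |]. rewrite sumV_S, IHn, S_INR. lra. Qed.

Lemma sumV_zero n f : (forall i, (i < n)%nat -> f i = 0) -> sumV n f = 0.
Proof. intros H. rewrite (sumV_ext n f (fun _ => 0)) by auto. rewrite sumV_const. lra. Qed.

Lemma sumV_nonneg n f : (forall i, (i < n)%nat -> 0 <= f i) -> 0 <= sumV n f.
Proof.
  intros H. replace 0 with (sumV n (fun _ => 0)) at 1 by (rewrite sumV_const; lra).
  apply sumV_le; auto.
Qed.

Lemma sumV_ge_term n f a :
  (forall i, (i < n)%nat -> 0 <= f i) -> (a < n)%nat -> f a <= sumV n f.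
Proof.
  induction n; intros H Ha; [lia |]. rewrite sumV_S.
  destruct (Nat.eq_dec a n) as [-> | Hne].
  - assert (0 <= sumV n f) by (apply sumV_nonneg; intros; apply H; lia). lra.
  - assert (f a <= sumV n f) by (apply IHn; [intros; apply H; lia | lia]).
    assert (0 <= f n) by (apply H; lia). lra.
Qed.

Lemma sumV_abs n f : Rabs (sumV n f) <= sumV n (fun i => Rabs (f i)).
Proof.
  induction n; [rewrite !sumV_0, Rabs_R0; lra |]. rewrite !sumV_S.
  eapply Rle_trans; [apply Rabs_triang |]. lra.
Qed.

Lemma sumV_swap n m F :
  sumV n (fun i => sumV m (fun j => F i j)) = sumV m (fun j => sumV n (fun i => F i j)).
Proof.
  induction n.
  - rewrite sumV_0. symmetry. apply sumV_zero. intros; apply sumV_0.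
  - rewrite sumV_S, IHn, <- sumV_plus. apply sumV_ext; intros; rewrite sumV_S; reflexivity.
Qed.

Lemma sumV_delta n a (X : R) :
  (a < n)%nat -> sumV n (fun i => if Nat.eqb i a then X else 0) = X.
Proof.
  induction n; intros Ha; [lia |]. rewrite sumV_S.
  destruct (Nat.eq_dec a n) as [-> | Hne].
  - rewrite Nat.eqb_refl, sumV_zero; [lra |].
    intros i Hi. destruct (Nat.eqb_spec i n); [lia | auto].
  - rewrite IHn by lia. destruct (Nat.eqb_spec n a); [lia | lra].
Qed.

Lemma sumV2_lin n (A B D : nat -> nat -> R) k1 k2 :
  k1 * sumV n (fun i => sumV n (fun j => A i j))
  + k2 * (sumV n (fun i => sumV n (fun j => B i j)) + sumV n (fun i => sumV n (fun j => D i j)))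
  = sumV n (fun i => sumV n (fun j => k1 * A i j + k2 * (B i j + D i j))).
Proof.
  rewrite <- sumV_plus, <- !sumV_scal, <- sumV_plus. apply sumV_ext. intros i Hi.
  rewrite <- sumV_plus, <- !sumV_scal, <- sumV_plus. reflexivity.
Qed.

Lemma sumV2_antisym n (a : nat -> nat -> R) :
  (forall i j, a j i = - a i j) -> sumV n (fun i => sumV n (fun j => a i j)) = 0.
Proof.
  intros H. set (S := sumV n (fun i => sumV n (fun j => a i j))).
  assert (S = -1 * S); [| lra].
  unfold S at 1. rewrite sumV_swap. unfold S. rewrite <- sumV_scal. apply sumV_ext. intros i _.
  rewrite <- sumV_scal. apply sumV_ext. intros j _. rewrite H. ring.
Qed.

Lemma card_sum n P : INR (card n P) = sumV n (fun i => if P i then 1 else 0).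
Proof.
  unfold card. induction n; [reflexivity |].
  rewrite seq_S, filter_app, length_app, plus_INR, IHn, sumV_S. simpl.
  destruct (P n); simpl; lra.
Qed.

Lemma card_none n P : (forall i, (i < n)%nat -> P i = false) -> card n P = 0%nat.
Proof.
  intros H. apply INR_eq. rewrite card_sum, sumV_zero; [reflexivity |].
  intros i Hi. rewrite H; auto.
Qed.

Lemma card_pos n P i : (i < n)%nat -> P i = true -> 1 <= INR (card n P).
Proof.
  intros Hi HP. rewrite card_sum.
  assert (H := sumV_ge_term n (fun i => if P i then 1 else 0) i). simpl in H. rewrite HP in H.
  apply H; auto. intros j _. destruct (P j); lra.
Qed.

Lemma card_le_n n P : INR (card n P) <= INR n.
Proof.
  rewrite card_sum, <- (Rmult_1_r (INR n)), <- sumV_const. apply sumV_le.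
  intros; destruct (P i); lra.
Qed.

Lemma card_mono_strict n P Q i0 :
  (forall i, (i < n)%nat -> P i = true -> Q i = true) ->
  (i0 < n)%nat -> P i0 = false -> Q i0 = true -> INR (card n P) + 1 <= INR (card n Q).
Proof.
  intros H Hi0 P0 Q0. rewrite !card_sum.
  replace (sumV n (fun i => if P i then 1 else 0) + 1)
    with (sumV n (fun i => (if P i then 1 else 0) + (if Nat.eqb i i0 then 1 else 0)))
    by (rewrite sumV_plus, sumV_delta; auto).
  apply sumV_le. intros i Hi. destruct (Nat.eqb_spec i i0) as [-> |]; [rewrite P0, Q0; lra |].
  destruct (P i) eqn:E; [rewrite (H i Hi E); lra | destruct (Q i); lra].
Qed.

Lemma exists_argmin n (P : nat -> bool) (f : nat -> R) :
  (exists i, (i < n)%nat /\ P i = true) ->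
  exists i0, (i0 < n)%nat /\ P i0 = true /\
    forall j, (j < n)%nat -> P j = true -> f i0 <= f j.
Proof.
  induction n; intros [i [Hi HP]]; [lia |].
  destruct (classic (exists i, (i < n)%nat /\ P i = true)) as [Ex | NEx].
  - destruct (IHn Ex) as [i0 [H1 [H2 H3]]].
    destruct (P n) eqn:Pn; [destruct (Rle_dec (f i0) (f n)) |].
    + exists i0. split; [lia | split; auto]. intros j Hj Pj.
      destruct (Nat.eq_dec j n) as [-> |]; [auto | apply H3; auto; lia].
    + exists n. split; [lia | split; auto]. intros j Hj Pj.
      destruct (Nat.eq_dec j n) as [-> |]; [lra |].
      assert (f i0 <= f j) by (apply H3; auto; lia). lra.
    + exists i0. split; [lia | split; auto]. intros j Hj Pj.
      destruct (Nat.eq_dec j n) as [-> |]; [congruence | apply H3; auto; lia].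
  - assert (i = n) as ->.
    { destruct (Nat.eq_dec i n); auto. exfalso; apply NEx; exists i; split; auto; lia. }
    exists n. split; [lia | split; auto]. intros j Hj Pj.
    destruct (Nat.eq_dec j n) as [-> |]; [lra |]. exfalso; apply NEx; exists j; split; auto; lia.
Qed.

(** * Maximum principle *)

Lemma last_cons_indep (b : nat) t d1 d2 : last (b :: t) d1 = last (b :: t) d2.
Proof. revert b. induction t; intros b; [reflexivity |]. apply (IHt a). Qed.

Lemma walk_invariant (adj : nat -> nat -> bool) (Pr : nat -> Prop) :
  (forall u v, Pr u -> adj u v = true -> Pr v) ->
  forall w u, chain adj w -> hd_error w = Some u -> Pr u -> Pr (last w u).
Proof.
  intros Hs w. induction w as [| a t IH]; intros u Hc Hh Hu; [discriminate |].
  simpl in Hh. injection Hh as ->. destruct t as [| b t']; [exact Hu |].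
  destruct Hc as [Hab Hc].
  change (last (u :: b :: t') u) with (last (b :: t') u).
  rewrite (last_cons_indep b t' u b). apply IH; auto. eapply Hs; eauto.
Qed.

(* On a connected graph with positive conductances, a function harmonic off a
   nonempty set Gam is bounded by its supremum on Gam: a maximum is attained
   off Gam only if the function is constant along every walk from there. *)
Lemma max_principle n adj (c : nat -> nat -> R) (Gam : nat -> bool) (V : nat -> R) B g :
  simple_graph n adj -> connected n adj -> (forall i j, adj i j = true -> 0 < c i j) ->
  (g < n)%nat -> Gam g = true ->
  (forall i, (i < n)%nat -> Gam i = true -> V i <= B) ->
  (forall i, (i < n)%nat -> Gam i = false ->
     sumV n (fun j => if adj i j then c i j * (V i - V j) else 0) = 0) ->
  forall i, (i < n)%nat -> V i <= B.
Proof.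
  intros [_ [_ Hlt]] Hcon Hc Hg HGg HB Hh i Hi.
  destruct (exists_argmin n (fun _ => true) (fun i => - V i)) as [i1 [Hi1 [_ Hmax]]].
  { exists g; auto. }
  assert (Vi : V i <= V i1) by (specialize (Hmax i Hi eq_refl); lra).
  destruct (Rle_dec (V i1) B) as [| Hgt]; [lra | exfalso].
  set (Pr := fun u => (u < n)%nat /\ V u = V i1).
  assert (Hs : forall u v, Pr u -> adj u v = true -> Pr v).
  { intros u v [Hu HVu] Hadj. assert (Hv : (v < n)%nat) by apply (Hlt u v Hadj).
    split; auto.
    assert (Gu : Gam u = false).
    { destruct (Gam u) eqn:E; auto. specialize (HB u Hu E). lra. }
    specialize (Hh u Hu Gu).
    destruct (Rle_dec (V i1) (V v)) as [Hle | Hlt']; [specialize (Hmax v Hv eq_refl); lra |].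
    exfalso.
    set (t := fun j => if adj u j then c u j * (V u - V j) else 0) in Hh.
    assert (Hpos : 0 < t v).
    { unfold t. rewrite Hadj. apply Rmult_lt_0_compat; [apply Hc; auto | lra]. }
    assert (t v <= sumV n t); [| lra].
    apply sumV_ge_term; auto. intros j Hj. unfold t.
    destruct (adj u j) eqn:E; [| lra]. apply Rmult_le_pos; [left; apply Hc; auto |].
    specialize (Hmax j Hj eq_refl). lra. }
  destruct (Hcon i1 g Hi1 Hg) as [k [w [Hc1 [Hh1 [Hl1 _]]]]].
  assert (HPr : Pr (last w i1)) by (apply (walk_invariant adj Pr Hs w i1); auto; split; auto).
  rewrite Hl1 in HPr. destruct HPr as [_ HV]. specialize (HB g Hg HGg). lra.
Qed.

(** * Expansion and the co-area inequality *)

Definition pos_part (r : R) : R := Rmax 0 r.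

Definition is_pos (r : R) : bool := if Rlt_dec 0 r then true else false.

Definition outside (n : nat) (L : nat -> bool) (i : nat) : bool := Nat.ltb i n && negb (L i).

(* Total conductance of the edges of G - L leaving S, and the volume of S in G - L;
   these are the two sums compared in (P4). *)
Definition cut_weight n (adj : nat -> nat -> bool) (c : nat -> nat -> R) (L S : nat -> bool) : R :=
  sumV n (fun i => if S i then
    sumV n (fun j => if adj i j && (Nat.ltb j n && negb (L j) && negb (S j)) then c i j else 0)
  else 0).

Definition volume n (adj : nat -> nat -> bool) (c : nat -> nat -> R) (L S : nat -> bool) : R :=
  sumV n (fun i => if S i then sumV n (fun j => if adj i j && negb (L j) then c i j else 0) else 0).

Definition expands n (adj : nat -> nat -> bool) (c : nat -> nat -> R) (L : nat -> bool) (h : R) : Prop :=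
  forall S : nat -> bool, (forall i, S i = true -> (i < n)%nat /\ L i = false) ->
    INR (card n S) <= INR n / 2 -> h * volume n adj c L S <= cut_weight n adj c L S.

Definition out_degree n (adj : nat -> nat -> bool) (c : nat -> nat -> R) (L : nat -> bool) i : R :=
  sumV n (fun j => if adj i j && negb (L j) then c i j else 0).

Definition mass n (adj : nat -> nat -> bool) (c : nat -> nat -> R) (L : nat -> bool) (F : nat -> R) : R :=
  sumV n (fun i => if outside n L i then F i * out_degree n adj c L i else 0).

Definition upper_variation n (adj : nat -> nat -> bool) (c : nat -> nat -> R) (L : nat -> bool)
    (F : nat -> R) : R :=
  sumV n (fun i => if outside n L i then
    sumV n (fun j => if adj i j && outside n L j then c i j * pos_part (F i - F j) else 0)
  else 0).

Lemma is_pos_true r : is_pos r = true <-> 0 < r.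
Proof. unfold is_pos. destruct (Rlt_dec 0 r); split; intros; auto; discriminate. Qed.

Lemma is_pos_false r : is_pos r = false <-> ~ 0 < r.
Proof. unfold is_pos. destruct (Rlt_dec 0 r); split; intros; auto; try discriminate; contradiction. Qed.

Lemma pos_part_nonneg r : 0 <= pos_part r.
Proof. unfold pos_part, Rmax. destruct (Rle_dec 0 r); lra. Qed.

Lemma pos_part_neg r : r <= 0 -> pos_part r = 0.
Proof. intros; unfold pos_part, Rmax; destruct (Rle_dec 0 r); lra. Qed.

Lemma pos_part_pos r : 0 <= r -> pos_part r = r.
Proof. intros; unfold pos_part, Rmax; destruct (Rle_dec 0 r); lra. Qed.

Lemma is_pos_pos_part r : is_pos (pos_part r) = is_pos r.
Proof.
  destruct (Rle_dec 0 r); [rewrite pos_part_pos; auto |].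
  rewrite pos_part_neg by lra.
  destruct (is_pos r) eqn:E; [apply is_pos_true in E; lra |]. apply is_pos_false. lra.
Qed.

Lemma outside_spec n L i : outside n L i = true <-> (i < n)%nat /\ L i = false.
Proof.
  unfold outside. rewrite andb_true_iff, Nat.ltb_lt, negb_true_iff. tauto.
Qed.

Lemma upper_variation_nonneg n adj c L F :
  (forall i j, adj i j = true -> 0 <= c i j) -> 0 <= upper_variation n adj c L F.
Proof.
  intros Hc. apply sumV_nonneg. intros i Hi. destruct (outside n L i); [| lra].
  apply sumV_nonneg. intros j Hj. destruct (adj i j) eqn:E; simpl; [| lra].
  destruct (outside n L j); [| lra]. apply Rmult_le_pos; [auto | apply pos_part_nonneg].
Qed.

Section Layer_peeling.
(* Cutting F at height t on its support S: F = t * 1_S + (F - t)_+ there. *)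
Variables (n : nat) (adj : nat -> nat -> bool) (c : nat -> nat -> R) (L S : nat -> bool).
Variables (F : nat -> R) (t : R).
Hypothesis HS : forall i, S i = true -> outside n L i = true.
Hypothesis Ht : 0 <= t.
Hypothesis Hin : forall i, S i = true -> t <= F i.
Hypothesis Hout : forall i, S i = false -> F i = 0.

Let F' := fun i => if S i then F i - t else 0.

Lemma upper_variation_peel :
  upper_variation n adj c L F = t * cut_weight n adj c L S + upper_variation n adj c L F'.
Proof.
  unfold upper_variation, cut_weight. rewrite <- sumV_scal, <- sumV_plus.
  apply sumV_ext. intros i Hi. unfold F'.
  destruct (outside n L i) eqn:Gi; destruct (S i) eqn:Si.
  - rewrite <- sumV_scal, <- sumV_plus. apply sumV_ext. intros j Hj.
    destruct (adj i j); simpl; [| lra].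
    unfold outside. destruct (Nat.ltb j n); simpl; [| lra]. destruct (L j); simpl; [lra |].
    specialize (Hin i Si). destruct (S j) eqn:Sj; simpl.
    + replace (F i - t - (F j - t)) with (F i - F j) by ring. lra.
    + rewrite (Hout j Sj), (pos_part_pos (F i - 0)), (pos_part_pos (F i - t - 0)) by lra. ring.
  - rewrite Rmult_0_r, Rplus_0_l. apply sumV_ext. intros j Hj.
    destruct (adj i j && outside n L j); [| lra]. rewrite (Hout i Si).
    destruct (S j) eqn:Sj.
    + specialize (Hin j Sj).
      rewrite (pos_part_neg (0 - F j)), (pos_part_neg (0 - (F j - t))) by lra. ring.
    + rewrite (Hout j Sj). lra.
  - specialize (HS i Si). congruence.
  - lra.
Qed.

Lemma mass_peel : mass n adj c L F = t * volume n adj c L S + mass n adj c L F'.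
Proof.
  unfold mass, volume. rewrite <- sumV_scal, <- sumV_plus. apply sumV_ext. intros i Hi.
  fold (out_degree n adj c L i). unfold F'.
  destruct (outside n L i) eqn:Gi; destruct (S i) eqn:Si.
  - ring.
  - rewrite (Hout i Si). ring.
  - specialize (HS i Si). congruence.
  - lra.
Qed.

End Layer_peeling.

(* Induction on the size of the support, peeling off the
   layer below the smallest positive value of F. *)
Lemma coarea n adj c L h :
  (forall i j, adj i j = true -> 0 <= c i j) ->
  expands n adj c L h ->
  forall N F, (forall i, 0 <= F i) -> (forall i, 0 < F i -> outside n L i = true) ->
  (card n (fun i => is_pos (F i)) <= N)%nat ->
  INR (card n (fun i => is_pos (F i))) <= INR n / 2 ->
  h * mass n adj c L F <= upper_variation n adj c L F.
Proof.
  intros Hc Hexp N. induction N as [| N IH]; intros F HF0 HFG HN Hhalf.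
  -
    replace (mass n adj c L F) with 0; [rewrite Rmult_0_r; apply upper_variation_nonneg; auto |].
    symmetry. apply sumV_zero. intros i Hi. destruct (Rlt_dec 0 (F i)) as [Hp | Hp].
    + assert (Hone : 1 <= INR (card n (fun i => is_pos (F i))))
        by (apply (card_pos n _ i); auto; apply is_pos_true; auto).
      replace (card n (fun i => is_pos (F i))) with 0%nat in Hone by lia. simpl in Hone. lra.
    + replace (F i) with 0 by (specialize (HF0 i); lra). destruct (outside n L i); lra.
  - set (S := fun i => is_pos (F i)).
    destruct (classic (exists i, (i < n)%nat /\ S i = true)) as [Ex | NEx].
    2:{ apply IH; auto. rewrite card_none; [lia |]. intros i Hi. destruct (S i) eqn:E; auto.
        exfalso; apply NEx; eauto. }
    destruct (exists_argmin n S F Ex) as [i0 [Hi0 [Hp0 Hmin]]].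
    set (t := F i0). assert (Ht : 0 < t) by (apply is_pos_true; auto).
    assert (HS : forall i, S i = true -> outside n L i = true)
      by (intros i Hi; apply HFG, is_pos_true, Hi).
    assert (Hin : forall i, S i = true -> t <= F i).
    { intros i Hi. apply Hmin; auto. apply (outside_spec n L i), HS, Hi. }
    assert (Hout : forall i, S i = false -> F i = 0).
    { intros i Hi. apply is_pos_false in Hi. specialize (HF0 i). lra. }
    set (F' := fun i => if S i then F i - t else 0).
    assert (HF'S : forall i, 0 < F' i -> S i = true /\ t < F i).
    { intros i. unfold F'. destruct (S i) eqn:E; intros; [split; auto; lra | lra]. }
    (* the peeled function has a strictly smaller support: it vanishes at i0 *)
    assert (Hcard : INR (card n (fun i => is_pos (F' i))) + 1 <= INR (card n S)).
    { apply (card_mono_strict n _ _ i0); auto.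
      - intros i _ Hi. apply is_pos_true in Hi. apply HF'S, Hi.
      - apply is_pos_false. unfold F'. rewrite Hp0. unfold t. lra. }
    assert (IH' : h * mass n adj c L F' <= upper_variation n adj c L F').
    { apply IH.
      - intros i. unfold F'. destruct (S i) eqn:E; [specialize (Hin i E); lra | lra].
      - intros i Hi. apply HFG. specialize (HF'S i Hi). lra.
      - assert (Hlt' : INR (card n (fun i => is_pos (F' i))) < INR (card n S)) by lra.
        apply INR_lt in Hlt'. unfold S in Hlt'. lia.
      - unfold S in Hcard. lra. }
    assert (HPS : h * volume n adj c L S <= cut_weight n adj c L S).
    { apply Hexp; auto. intros i Hi. apply (outside_spec n L i), HS, Hi. }
    rewrite (upper_variation_peel n adj c L S F t), (mass_peel n adj c L S F t); try lra; auto.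
    fold F'. assert (t * (h * volume n adj c L S) <= t * cut_weight n adj c L S)
      by (apply Rmult_le_compat_l; lra).
    nra.
Qed.

(** * From expansion to a Poincare inequality *)

Definition upper_energy n (adj : nat -> nat -> bool) (c : nat -> nat -> R) (L : nat -> bool)
    (f : nat -> R) : R :=
  sumV n (fun i => if outside n L i then
    sumV n (fun j => if adj i j && outside n L j then c i j * (pos_part (f i - f j))^2 else 0)
  else 0).

Lemma sumV_if_flatten n (b : nat -> bool) (b2 : nat -> nat -> bool) (X : nat -> nat -> R) :
  sumV n (fun i => if b i then sumV n (fun j => if b2 i j then X i j else 0) else 0) =
  sumV n (fun i => sumV n (fun j => if b i && b2 i j then X i j else 0)).
Proof.
  apply sumV_ext. intros i Hi. destruct (b i); simpl; [reflexivity |].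
  symmetry. apply sumV_zero; auto.
Qed.

Lemma pos_part_sq_diff a b e : 0 <= a -> 0 <= b -> 0 < e ->
  pos_part (a^2 - b^2) <= (pos_part (a - b))^2 / (2*e) + e * (a^2 + b^2).
Proof.
  intros Ha Hb He. assert (Hinv : 0 < / (2*e)) by (apply Rinv_0_lt_compat; lra).
  destruct (Rle_dec b a).
  - rewrite (pos_part_pos (a^2 - b^2)) by nra. rewrite (pos_part_pos (a - b)) by lra.
    assert (H : 0 <= ((a - b) - e*(a+b))^2 / (2*e)) by (apply Rmult_le_pos; [apply pow2_ge_0 | lra]).
    assert (H2 : ((a - b) - e*(a+b))^2 / (2*e) = (a-b)^2/(2*e) - (a-b)*(a+b) + e*(a+b)^2/2)
      by (field; lra).
    assert (0 <= e * (a - b)^2) by (apply Rmult_le_pos; [lra | apply pow2_ge_0]). lra.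
  - rewrite pos_part_neg by nra.
    assert (0 <= (pos_part (a - b))^2 / (2*e)) by (apply Rmult_le_pos; [apply pow2_ge_0 | lra]).
    nra.
Qed.

Section Poincare.
Variables (n : nat) (adj : nat -> nat -> bool) (c : nat -> nat -> R) (L : nat -> bool).
Hypothesis Hrange : forall i j, adj i j = true -> (i < n)%nat /\ (j < n)%nat.
Hypothesis Hsym : forall i j, adj i j = adj j i.
Hypothesis Hcsym : forall i j, c i j = c j i.
Hypothesis Hcnn : forall i j, adj i j = true -> 0 <= c i j.

Lemma edge_sum_mass F :
  sumV n (fun i => sumV n (fun j =>
    if outside n L i && adj i j && outside n L j then c i j * F i else 0))
  = mass n adj c L F.
Proof.
  apply sumV_ext. intros i Hi. destruct (outside n L i); simpl.
  - unfold out_degree. rewrite <- sumV_scal. apply sumV_ext. intros j Hj.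
    destruct (adj i j) eqn:A; simpl; [| lra].
    destruct (Hrange i j A) as [_ Hjn]. unfold outside.
    apply Nat.ltb_lt in Hjn. rewrite Hjn. simpl. destruct (L j); simpl; ring.
  - apply sumV_zero; auto.
Qed.

Lemma upper_variation_sq f e : (forall i, 0 <= f i) -> 0 < e ->
  upper_variation n adj c L (fun i => (f i)^2)
  <= upper_energy n adj c L f / (2 * e) + e * (2 * mass n adj c L (fun i => (f i)^2)).
Proof.
  intros Hf0 He. set (F := fun i => (f i)^2).
  set (T1 := sumV n (fun i => sumV n (fun j =>
                if outside n L i && adj i j && outside n L j then c i j * F i else 0))).
  set (T2 := sumV n (fun i => sumV n (fun j =>
                if outside n L i && adj i j && outside n L j then c i j * F j else 0))).
  assert (HT2 : T2 = T1).
  { unfold T2, T1. rewrite sumV_swap. apply sumV_ext. intros i Hi. apply sumV_ext. intros j Hj.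
    rewrite (Hsym j i), (Hcsym j i).
    destruct (outside n L i), (adj i j), (outside n L j); simpl; auto. }
  assert (HT1 : T1 = mass n adj c L F) by apply edge_sum_mass.
  replace (2 * mass n adj c L F) with (T1 + T2) by lra.
  unfold upper_variation, upper_energy. rewrite !sumV_if_flatten. unfold T1, T2.
  unfold Rdiv. rewrite Rmult_comm, sumV2_lin.
  apply sumV_le. intros i Hi. apply sumV_le. intros j Hj. rewrite andb_assoc.
  destruct (outside n L i && adj i j && outside n L j) eqn:E0; [| lra].
  assert (0 <= c i j) by (apply Hcnn; apply andb_prop in E0 as [E0 _]; apply andb_prop in E0; tauto).
  assert (Ha := pos_part_sq_diff (f i) (f j) e (Hf0 i) (Hf0 j) He). unfold F.
  replace (/ (2 * e) * (c i j * pos_part (f i - f j) ^ 2))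
    with (c i j * (pos_part (f i - f j) ^ 2 / (2 * e))) by (field; lra).
  assert (c i j * pos_part (f i ^ 2 - f j ^ 2)
          <= c i j * (pos_part (f i - f j) ^ 2 / (2 * e) + e * (f i ^ 2 + f j ^ 2)))
    by (apply Rmult_le_compat_l; auto).
  lra.
Qed.

(* Poincare inequality for functions supported on at most half of G - L:
   apply the co-area inequality to f^2 and absorb the mass term. *)
Lemma poincare_half h f :
  0 < h -> expands n adj c L h ->
  (forall i, 0 <= f i) -> (forall i, 0 < f i -> outside n L i = true) ->
  INR (card n (fun i => is_pos (f i))) <= INR n / 2 ->
  mass n adj c L (fun i => (f i)^2) <= 4 / h^2 * upper_energy n adj c L f.
Proof.
  intros Hh Hexp Hf0 HfG Hhalf. set (F := fun i => (f i)^2).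
  assert (Hcard : card n (fun i => is_pos (F i)) = card n (fun i => is_pos (f i))).
  { unfold card. f_equal. apply filter_ext. intros i. unfold F.
    destruct (is_pos (f i)) eqn:E.
    - apply is_pos_true in E. apply is_pos_true. nra.
    - apply is_pos_false in E. apply is_pos_false. specialize (Hf0 i). nra. }
  assert (Hco : h * mass n adj c L F <= upper_variation n adj c L F).
  { apply (coarea n adj c L h Hcnn Hexp (card n (fun i => is_pos (F i)))); auto.
    - intros i. unfold F. nra.
    - intros i Hi. apply HfG. unfold F in Hi.
      destruct (Rlt_dec 0 (f i)); auto. specialize (Hf0 i). nra.
    - rewrite Hcard; auto. }
  assert (Hup := upper_variation_sq f (h / 4) Hf0 ltac:(lra)). fold F in Hup.
  set (X := mass n adj c L F) in *. set (E := upper_energy n adj c L f) in *.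
  replace (E / (2 * (h / 4))) with (2 * E / h) in Hup by (field; lra).
  assert (h / 2 * X <= 2 * E / h) by lra.
  apply (Rmult_le_reg_l (h^2 / 2)); [nra |].
  replace (h ^ 2 / 2 * (4 / h ^ 2 * E)) with (h * (2 * E / h)) by (field; lra).
  replace (h^2 / 2 * X) with (h * (h / 2 * X)) by (field; lra).
  apply Rmult_le_compat_l; lra.
Qed.

End Poincare.

(** * Median and the L2 deviation bound *)

(* Every function has a "median" m on G: at most half of the vertices of G
   lie strictly above m and at most half strictly below.  (m is 0 when G is
   empty, and a value of the function otherwise.) *)
Lemma median n (G : nat -> bool) (V : nat -> R) :
  exists m, (m = 0 \/ exists i0, (i0 < n)%nat /\ G i0 = true /\ m = V i0) /\
    INR (card n (fun i => G i && is_pos (V i - m))) <= INR n / 2 /\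
    INR (card n (fun i => G i && is_pos (m - V i))) <= INR n / 2.
Proof.
  assert (Hn0 : 0 <= INR n) by apply pos_INR.
  destruct (classic (exists i, (i < n)%nat /\ G i = true)) as [Ex | NEx].
  2:{ exists 0. split; [left; auto |]. rewrite !card_none; [simpl; split; lra | |];
      intros i Hi; destruct (G i) eqn:E; auto; exfalso; apply NEx; eauto. }
  set (above := fun t => INR (card n (fun i => G i && is_pos (V i - t)))).
  (* A: the vertices of G with at most n/2 vertices strictly above them;
     it contains a maximiser i1 of V, and m is the minimum of V on A *)
  destruct (exists_argmin n G (fun i => - V i) Ex) as [i1 [Hi1 [Gi1 Hmax]]].
  set (A := fun i => G i && (if Rle_dec (above (V i)) (INR n / 2) then true else false)).
  assert (HA1 : A i1 = true).
  { unfold A. rewrite Gi1. simpl. destruct (Rle_dec (above (V i1)) (INR n / 2)) as [| Hno]; auto.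
    exfalso. apply Hno. unfold above. rewrite card_none; [simpl; lra |]. intros i Hi.
    destruct (G i) eqn:Gi; auto. simpl. apply is_pos_false. specialize (Hmax i Hi Gi). lra. }
  destruct (exists_argmin n A V (ex_intro _ i1 (conj Hi1 HA1))) as [i0 [Hi0 [Ai0 Hmin]]].
  unfold A in Ai0. apply andb_prop in Ai0 as [Gi0 Ai0].
  exists (V i0). split; [right; exists i0; repeat split; auto |]. split.
  { destruct (Rle_dec (above (V i0)) (INR n / 2)); [auto | discriminate]. }
  set (B := fun i => G i && is_pos (V i0 - V i)).
  destruct (Rle_dec (INR (card n B)) (INR n / 2)) as [| Hgt]; auto. exfalso.
  (* otherwise let k maximise V on B: k is not in A, yet few vertices lie above V k *)
  assert (ExB : exists i, (i < n)%nat /\ B i = true).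
  { destruct (classic (exists i, (i < n)%nat /\ B i = true)) as [| NB]; auto. exfalso. apply Hgt.
    rewrite card_none; [simpl; lra |]. intros i Hi. destruct (B i) eqn:E; auto.
    exfalso; apply NB; eauto. }
  destruct (exists_argmin n B (fun i => - V i) ExB) as [k [Hk [Bk Hkmax]]].
  unfold B in Bk. apply andb_prop in Bk as [Gk Bk]. apply is_pos_true in Bk.
  assert (Hsplit : above (V k) + INR (card n B) <= INR (card n G)).
  { unfold above. rewrite !card_sum, <- sumV_plus. apply sumV_le. intros i Hi.
    destruct (G i) eqn:Gi; simpl; [| unfold B; rewrite Gi; simpl; lra].
    destruct (is_pos (V i - V k)) eqn:E1; [| destruct (B i); lra].
    apply is_pos_true in E1. destruct (B i) eqn:Bi; [| lra].
    specialize (Hkmax i Hi Bi). lra. }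
  assert (HG := card_le_n n G).
  assert (Ak : A k = true).
  { unfold A. rewrite Gk. simpl. destruct (Rle_dec (above (V k)) (INR n / 2)); auto; lra. }
  specialize (Hmin k Hk Ak). lra.
Qed.

(* Dirichlet energy of V on the edges of G - L (each edge counted twice). *)
Definition inner_energy n (adj : nat -> nat -> bool) (c : nat -> nat -> R) (L : nat -> bool)
    (V : nat -> R) : R :=
  sumV n (fun i => if outside n L i then
    sumV n (fun j => if adj i j && outside n L j then c i j * (V i - V j)^2 else 0)
  else 0).

Lemma pos_part_lip a b : (pos_part (pos_part a - pos_part b))^2 <= (a - b)^2.
Proof.
  assert (Hsq : 0 <= (a - b)^2) by apply pow2_ge_0.
  destruct (Rle_dec 0 a), (Rle_dec 0 b).
  - rewrite (pos_part_pos a), (pos_part_pos b) by lra. destruct (Rle_dec 0 (a - b)).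
    + rewrite pos_part_pos by lra. lra.
    + rewrite pos_part_neg by lra. simpl; lra.
  - rewrite (pos_part_pos a), (pos_part_neg b) by lra. rewrite pos_part_pos by lra. simpl. nra.
  - rewrite (pos_part_neg a), (pos_part_pos b) by lra. rewrite pos_part_neg by lra. simpl in *. lra.
  - rewrite (pos_part_neg a), (pos_part_neg b) by lra. rewrite pos_part_neg by lra. simpl in *. lra.
Qed.

Lemma pos_part_sq x : (pos_part x)^2 + (pos_part (- x))^2 = x^2.
Proof.
  destruct (Rle_dec 0 x).
  - rewrite (pos_part_pos x), (pos_part_neg (-x)) by lra. ring.
  - rewrite (pos_part_neg x), (pos_part_pos (-x)) by lra. ring.
Qed.

(* Apply [poincare_half] to
   the parts of V - m above and below m, each supported on at most half of G - L. *)
Lemma l2_deviation_bound n adj c L h V :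
  (forall i j, adj i j = true -> (i < n)%nat /\ (j < n)%nat) ->
  (forall i j, adj i j = adj j i) -> (forall i j, c i j = c j i) ->
  (forall i j, adj i j = true -> 0 <= c i j) -> 0 < h -> expands n adj c L h ->
  exists m, (m = 0 \/ exists i0, (i0 < n)%nat /\ outside n L i0 = true /\ m = V i0) /\
    sumV n (fun i => if outside n L i then (V i - m)^2 * out_degree n adj c L i else 0)
    <= 8 / h^2 * inner_energy n adj c L V.
Proof.
  intros Hrange Hsym Hcsym Hcnn Hh Hexp.
  destruct (median n (outside n L) V) as [m [Hm [Habove Hbelow]]].
  exists m. split; auto.
  set (f := fun (g : nat -> R) i => if outside n L i then pos_part (g i) else 0).
  assert (Hpart : forall g : nat -> R,
            INR (card n (fun i => outside n L i && is_pos (g i))) <= INR n / 2 ->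
            (forall i j, (g i - g j)^2 <= (V i - V j)^2) ->
            mass n adj c L (fun i => (f g i)^2) <= 4 / h^2 * inner_energy n adj c L V).
  { intros g Hhalf Hlip. eapply Rle_trans.
    - apply (poincare_half n adj c L Hrange Hsym Hcsym Hcnn h (f g) Hh Hexp).
      + intros i. unfold f. destruct (outside n L i); [apply pos_part_nonneg | lra].
      + intros i. unfold f. destruct (outside n L i) eqn:E; auto. lra.
      + replace (card n (fun i => is_pos (f g i))) with (card n (fun i => outside n L i && is_pos (g i)));
          auto.
        unfold card. f_equal. apply filter_ext. intros i. unfold f.
        destruct (outside n L i); simpl; symmetry; [apply is_pos_pos_part | apply is_pos_false; lra].
    - apply Rmult_le_compat_l; [apply Rlt_le, Rdiv_lt_0_compat; [lra | nra] |].
      apply sumV_le. intros i Hi. destruct (outside n L i) eqn:Gi; [| lra].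
      apply sumV_le. intros j Hj. destruct (adj i j) eqn:A; simpl; [| lra].
      destruct (outside n L j) eqn:Gj; [| lra]. unfold f. rewrite Gi, Gj.
      apply Rmult_le_compat_l; [apply Hcnn; auto |].
      eapply Rle_trans; [apply pos_part_lip | apply Hlip]. }
  assert (Hup := Hpart (fun i => V i - m) Habove ltac:(intros i j; right; ring)).
  assert (Hdown := Hpart (fun i => m - V i) Hbelow ltac:(intros i j; right; ring)).
  assert (Hsplit : sumV n (fun i => if outside n L i then (V i - m)^2 * out_degree n adj c L i else 0)
                   = mass n adj c L (fun i => (f (fun i => V i - m) i)^2)
                     + mass n adj c L (fun i => (f (fun i => m - V i) i)^2)).
  { unfold mass. rewrite <- sumV_plus. apply sumV_ext. intros i Hi. unfold f.
    destruct (outside n L i); [| lra].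
    rewrite <- (pos_part_sq (V i - m)). replace (m - V i) with (- (V i - m)) by ring. ring. }
  lra.
Qed.

(** * Dirichlet principle *)

(* Dirichlet energy of U on the whole graph (each edge counted twice). *)
Definition energy n (adj : nat -> nat -> bool) (c : nat -> nat -> R) (U : nat -> R) : R :=
  sumV n (fun i => sumV n (fun j => if adj i j then c i j * (U i - U j)^2 else 0)).

(* A function harmonic off Gam has the least energy among all functions with
   the same values on Gam: the cross term of E(V + D) vanishes when D = 0 on Gam. *)
Lemma dirichlet_principle n adj c (Gam : nat -> bool) V W :
  (forall i j, adj i j = adj j i) -> (forall i j, c i j = c j i) ->
  (forall i j, adj i j = true -> 0 <= c i j) ->
  (forall i, (i < n)%nat -> Gam i = false ->
     sumV n (fun j => if adj i j then c i j * (V i - V j) else 0) = 0) ->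
  (forall i, (i < n)%nat -> Gam i = true -> W i = V i) ->
  energy n adj c V <= energy n adj c W.
Proof.
  intros Hsym Hcsym Hcnn Hh HW.
  set (D := fun i => W i - V i).
  set (flux := fun i j => if adj i j then c i j * (V i - V j) else 0).
  assert (Hcross1 : sumV n (fun i => sumV n (fun j => D i * flux i j)) = 0).
  { apply sumV_zero. intros i Hi. rewrite sumV_scal. unfold flux. destruct (Gam i) eqn:G.
    - unfold D. rewrite HW by auto. ring.
    - rewrite Hh by auto. ring. }
  assert (Hcross2 : sumV n (fun i => sumV n (fun j => D j * flux i j)) = 0).
  { rewrite sumV_swap, (sumV_ext n _ (fun i => -1 * sumV n (fun j => D i * flux i j))).
    - rewrite sumV_scal, Hcross1. ring.
    - intros i _. rewrite <- sumV_scal. apply sumV_ext. intros j _. unfold flux.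
      rewrite (Hsym j i), (Hcsym j i). destruct (adj i j); ring. }
  assert (HEq : energy n adj c W = 1 * energy n adj c V + 1 * (energy n adj c D +
     sumV n (fun i => sumV n (fun j => 2 * (D i * flux i j) - 2 * (D j * flux i j))))).
  { unfold energy. rewrite sumV2_lin. apply sumV_ext. intros i Hi. apply sumV_ext. intros j Hj.
    unfold D, flux. destruct (adj i j); ring. }
  assert (Hcross : sumV n (fun i => sumV n (fun j => 2 * (D i * flux i j) - 2 * (D j * flux i j))) = 0).
  { rewrite (sumV_ext n _ (fun i => 2 * sumV n (fun j => D i * flux i j) - 2 * sumV n (fun j => D j * flux i j)))
      by (intros i _; rewrite <- !sumV_scal, <- sumV_minus; reflexivity).
    rewrite sumV_minus, !sumV_scal, Hcross1, Hcross2. ring. }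
  assert (HD0 : 0 <= energy n adj c D).
  { apply sumV_nonneg. intros i Hi. apply sumV_nonneg. intros j Hj.
    destruct (adj i j) eqn:A; [| lra]. apply Rmult_le_pos; [apply Hcnn; auto | apply pow2_ge_0]. }
  rewrite HEq, Hcross. lra.
Qed.

Lemma inner_energy_le_energy n adj c L V :
  (forall i j, adj i j = true -> 0 <= c i j) -> inner_energy n adj c L V <= energy n adj c V.
Proof.
  intros Hcnn. apply sumV_le. intros u Hu.
  assert (Hterm : forall j, 0 <= (if adj u j then c u j * (V u - V j)^2 else 0)).
  { intros j. destruct (adj u j) eqn:A; [apply Rmult_le_pos; [apply Hcnn; auto | apply pow2_ge_0] | lra]. }
  destruct (outside n L u); [| apply sumV_nonneg; auto].
  apply sumV_le. intros j _. specialize (Hterm j).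
  destruct (adj u j); simpl; [destruct (outside n L j) |]; lra.
Qed.

(* A function with values in [0,1] on Gam and 0 elsewhere has energy at most twice
   the total conductance at Gam: only edges meeting Gam contribute, at most c each. *)
Lemma energy_supported_le n adj c (Gam : nat -> bool) W :
  (forall i j, adj i j = adj j i) -> (forall i j, c i j = c j i) ->
  (forall i j, adj i j = true -> 0 <= c i j) ->
  (forall u, Gam u = true -> 0 <= W u <= 1) -> (forall u, Gam u = false -> W u = 0) ->
  energy n adj c W <= 2 * sumV n (fun u => if Gam u then ctot n adj c u else 0).
Proof.
  intros Hsym Hcsym Hcnn HW1 HW0.
  set (A := sumV n (fun u => sumV n (fun j => if adj u j && Gam u then c u j else 0))).
  assert (HA : sumV n (fun u => if Gam u then ctot n adj c u else 0) = A).
  { apply sumV_ext. intros u _. unfold ctot. destruct (Gam u).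
    - apply sumV_ext. intros j _. destruct (adj u j); auto.
    - symmetry. apply sumV_zero. intros j _. destruct (adj u j); auto. }
  assert (HA' : sumV n (fun u => sumV n (fun j => if adj u j && Gam j then c u j else 0)) = A).
  { rewrite sumV_swap. apply sumV_ext. intros u _. apply sumV_ext. intros j _.
    rewrite (Hsym j u), (Hcsym j u). reflexivity. }
  assert (Hzero : sumV n (fun u => sumV n (fun j => 0)) = 0)
    by (apply sumV_zero; intros; apply sumV_zero; auto).
  rewrite HA. apply Rle_trans with (1 * A + 1 * (sumV n (fun u => sumV n (fun j => 0)) +
    sumV n (fun u => sumV n (fun j => if adj u j && Gam j then c u j else 0)))); [| lra].
  unfold A. rewrite sumV2_lin. apply sumV_le. intros u _. apply sumV_le. intros j _.
  destruct (adj u j) eqn:Aj; simpl; [| lra]. assert (Hc := Hcnn u j Aj).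
  assert (Hsq : (W u - W j)^2 <= (if Gam u then 1 else 0) + (if Gam j then 1 else 0)).
  { destruct (Gam u) eqn:Gu, (Gam j) eqn:Gj;
      repeat match goal with
      | G : Gam ?v = true |- _ => destruct (HW1 v G); clear G
      | G : Gam ?v = false |- _ => rewrite (HW0 v G); clear G
      end; nra. }
  apply Rmult_le_compat_l with (r := c u j) in Hsq; [| exact Hc].
  destruct (Gam u), (Gam j); lra.
Qed.

(** * Common neighbours in a proper graph *)

(* By (P2), two distinct vertices have at most two common neighbours: three
   common neighbours j1, j2, j3 of i and l would give two distinct short
   4-cycles i j1 l j2 and i j1 l j3 at distance 0. *)
Lemma common_neighbours_le_2 n adj :
  simple_graph n adj ->
  (forall l1 l2, short_cycle n adj l1 -> short_cycle n adj l2 ->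
     distinct_cycles l1 l2 -> cycles_far adj l1 l2 (ln (INR n) / ln (ln (INR n)))) ->
  4 <= ln (INR n) / (10 * ln (ln (INR n))) ->
  0 < ln (INR n) / ln (ln (INR n)) ->
  forall i l, i <> l -> INR (card n (fun j => adj i j && adj j l)) <= 2.
Proof.
  intros [Hsym [Hirr _]] HP2 Hshort Hpos i l Hil.
  destruct (Rle_dec (INR (card n (fun j => adj i j && adj j l))) 2) as [| Hgt]; auto. exfalso.
  unfold card in Hgt. set (lst := filter (fun j => adj i j && adj j l) (seq 0 n)) in *.
  assert (Hnd : NoDup lst) by (apply NoDup_filter, seq_NoDup).
  assert (Hin : forall j, In j lst -> adj i j = true /\ adj j l = true).
  { intros j Hj. unfold lst in Hj. apply filter_In in Hj as [_ Hj]. apply andb_prop in Hj. auto. }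
  destruct lst as [| j1 [| j2 [| j3 rest]]]; simpl in Hgt; try lra.
  destruct (Hin j1 ltac:(simpl; auto)) as [A1 B1].
  destruct (Hin j2 ltac:(simpl; auto)) as [A2 B2].
  destruct (Hin j3 ltac:(simpl; auto)) as [A3 B3].
  assert (Hne : forall a b, adj a b = true -> a <> b).
  { intros a b H E. subst. rewrite Hirr in H. discriminate. }
  apply NoDup_cons_iff in Hnd as [N1 Hnd]. apply NoDup_cons_iff in Hnd as [N2 _].
  assert (N12 : j1 <> j2) by (intro E; subst; apply N1; simpl; auto).
  assert (N13 : j1 <> j3) by (intro E; subst; apply N1; simpl; auto).
  assert (N23 : j2 <> j3) by (intro E; subst; apply N2; simpl; auto).
  assert (Ni1 := Hne _ _ A1). assert (Nl1 := Hne _ _ B1).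
  assert (Ni2 := Hne _ _ A2). assert (Nl2 := Hne _ _ B2).
  assert (Hcyc : forall j, adj i j = true -> adj j l = true -> j <> j1 ->
                 short_cycle n adj [i; j1; l; j]).
  { intros j Aj Bj N1j. assert (Nij := Hne _ _ Aj). assert (Nlj := Hne _ _ Bj). split.
    - split; [simpl; lia |]. split.
      + repeat constructor; simpl; intuition.
      + split; [simpl; repeat split; auto; rewrite Hsym; auto |]. simpl. rewrite Hsym. auto.
    - simpl length. simpl INR. lra. }
  assert (S2 := Hcyc j2 A2 B2 (not_eq_sym N12)).
  assert (S3 := Hcyc j3 A3 B3 (not_eq_sym N13)).
  assert (Hd : distinct_cycles [i; j1; l; j2] [i; j1; l; j3]).
  { exists j2, i. intros [H _].
    assert (Hedge : cyc_edge [i; j1; l; j2] j2 i) by (left; simpl; auto 10).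
    specialize (H Hedge). destruct H as [H | H]; simpl in H;
      repeat (destruct H as [H | H]; [inversion H; subst; congruence |]); contradiction. }
  assert (Hfar := HP2 _ _ S2 S3 Hd i i 0%nat [i] ltac:(simpl; auto) ltac:(simpl; auto)).
  assert (Hzero : ln (INR n) / ln (ln (INR n)) <= INR 0) by (apply Hfar; repeat split).
  simpl in Hzero. lra.
Qed.

(** * Two-step averaging *)

Definition transition n (adj : nat -> nat -> bool) (c : nat -> nat -> R) (u j : nat) : R :=
  c u j / ctot n adj c u.

Lemma transition_sum n adj c u :
  0 < ctot n adj c u -> sumV n (fun j => if adj u j then transition n adj c u j else 0) = 1.
Proof.
  intros H. unfold transition.
  rewrite (sumV_ext n _ (fun j => / ctot n adj c u * (if adj u j then c u j else 0)))
    by (intros j _; destruct (adj u j); unfold Rdiv; ring).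
  rewrite sumV_scal. fold (ctot n adj c u). field; lra.
Qed.

Lemma harmonic_average n adj c V m u : 0 < ctot n adj c u ->
  sumV n (fun j => if adj u j then c u j * (V u - V j) else 0) = 0 ->
  V u - m = sumV n (fun j => if adj u j then transition n adj c u j * (V j - m) else 0).
Proof.
  intros Hc H.
  assert (E : sumV n (fun j => if adj u j then c u j * (V u - V j) else 0) =
              (V u - m) * ctot n adj c u - sumV n (fun j => if adj u j then c u j * (V j - m) else 0)).
  { unfold ctot. rewrite <- sumV_scal, <- sumV_minus. apply sumV_ext. intros j _.
    destruct (adj u j); ring. }
  rewrite H in E. unfold transition.
  transitivity (/ ctot n adj c u * sumV n (fun j => if adj u j then c u j * (V j - m) else 0)).
  - apply (Rmult_eq_reg_l (ctot n adj c u)); [| lra]. field_simplify; lra.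
  - rewrite <- sumV_scal. apply sumV_ext. intros j _. destruct (adj u j); unfold Rdiv; ring.
Qed.

Section Two_step_averaging.
Variables (n : nat) (adj : nat -> nat -> bool) (c : nat -> nat -> R) (Gam : nat -> bool).
Variables (V : nat -> R) (m q K Bs : R).
Hypothesis Hrange : forall i j, adj i j = true -> (i < n)%nat /\ (j < n)%nat.
Hypothesis Hharm : forall u, (u < n)%nat -> Gam u = false ->
  sumV n (fun j => if adj u j then c u j * (V u - V j) else 0) = 0.
Hypothesis Hctot : forall u, (u < n)%nat -> 0 < ctot n adj c u.
Hypothesis Htrans : forall u j, adj u j = true -> 0 <= transition n adj c u j <= q.
Hypothesis Hdev1 : forall j, (j < n)%nat -> Rabs (V j - m) <= 1.
Hypothesis Hcard : INR (card n Gam) <= K.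
Hypothesis Hcommon : forall i l, i <> l -> INR (card n (fun j => adj i j && adj j l)) <= 2.
Hypothesis Hl2 : sumV n (fun l => (V l - m)^2) <= Bs.
Hypothesis Hq : 0 < q.

Local Notation Q := (transition n adj c).

Definition two_step (u l : nat) : R :=
  sumV n (fun j => if adj u j && negb (Gam j) && adj j l then Q u j * Q j l else 0).

Lemma two_step_expansion u : (u < n)%nat -> Gam u = false ->
  V u - m = sumV n (fun j => if adj u j && Gam j then Q u j * (V j - m) else 0)
            + sumV n (fun l => two_step u l * (V l - m)).
Proof.
  intros Hu Gu. rewrite (harmonic_average n adj c V m u (Hctot u Hu) (Hharm u Hu Gu)).
  unfold two_step.
  transitivity (sumV n (fun j => if adj u j && Gam j then Q u j * (V j - m) else 0) +
                sumV n (fun j => sumV n (fun l =>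
                  if adj u j && negb (Gam j) && adj j l then Q u j * Q j l * (V l - m) else 0))).
  - rewrite <- sumV_plus. apply sumV_ext. intros j Hj.
    destruct (adj u j) eqn:Aj; simpl; [| rewrite sumV_zero; auto; lra].
    destruct (Gam j) eqn:Gj; simpl; [rewrite sumV_zero; auto; lra |].
    destruct (Hrange u j Aj) as [_ Hjn].
    rewrite Rplus_0_l, (harmonic_average n adj c V m j (Hctot j Hjn) (Hharm j Hjn Gj)).
    rewrite <- sumV_scal. apply sumV_ext. intros l _. destruct (adj j l); ring.
  - f_equal. rewrite sumV_swap. apply sumV_ext. intros l _. rewrite Rmult_comm, <- sumV_scal.
    apply sumV_ext. intros j _. destruct (adj u j && negb (Gam j) && adj j l); ring.
Qed.

Lemma two_step_nonneg u l : 0 <= two_step u l.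
Proof.
  apply sumV_nonneg. intros j _. destruct (adj u j && negb (Gam j) && adj j l) eqn:E; [| lra].
  apply andb_prop in E as [E1 E2]. apply andb_prop in E1 as [E1 _].
  apply Rmult_le_pos; [apply Htrans; auto | apply Htrans; auto].
Qed.

Lemma two_step_total u : (u < n)%nat -> sumV n (two_step u) <= 1.
Proof.
  intros Hu. unfold two_step. rewrite sumV_swap, <- (transition_sum n adj c u (Hctot u Hu)).
  apply sumV_le. intros j Hj. destruct (adj u j) eqn:Aj; simpl; [destruct (Gam j); simpl |].
  - rewrite sumV_zero; auto. destruct (Htrans u j Aj); lra.
  - destruct (Hrange u j Aj) as [_ Hjn].
    rewrite (sumV_ext n _ (fun l => Q u j * (if adj j l then Q j l else 0)))
      by (intros l _; destruct (adj j l); ring).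
    rewrite sumV_scal, (transition_sum n adj c j (Hctot j Hjn)). lra.
  - rewrite sumV_zero; auto. lra.
Qed.

(* Returning to the start costs one transition probability only. *)
Lemma two_step_return u : (u < n)%nat -> two_step u u <= q.
Proof.
  intros Hu. unfold two_step.
  apply Rle_trans with (sumV n (fun j => q * (if adj u j then Q u j else 0))).
  - apply sumV_le. intros j _. destruct (adj u j) eqn:E1; simpl; [| lra].
    destruct (Htrans u j E1). destruct (Gam j); simpl; [nra |].
    destruct (adj j u) eqn:E2; [| nra]. destruct (Htrans j u E2). nra.
  - rewrite sumV_scal, (transition_sum n adj c u (Hctot u Hu)). lra.
Qed.

(* Reaching l <> u requires a common neighbour, of which there are at most two. *)
Lemma two_step_other u l : l <> u -> two_step u l <= 2 * q^2.
Proof.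
  intros Hl. unfold two_step.
  apply Rle_trans with (sumV n (fun j => q^2 * (if adj u j && adj j l then 1 else 0))).
  - apply sumV_le. intros j _. destruct (adj u j) eqn:E1; simpl; [| nra].
    destruct (Htrans u j E1). destruct (Gam j); simpl; [destruct (adj j l); nra |].
    destruct (adj j l) eqn:E2; [| nra]. destruct (Htrans j l E2). nra.
  - rewrite sumV_scal, <- card_sum. specialize (Hcommon u l (not_eq_sym Hl)). nra.
Qed.

Lemma two_step_sq_sum u : (u < n)%nat -> sumV n (fun l => (two_step u l)^2) <= 3 * q^2.
Proof.
  intros Hu.
  apply Rle_trans with (sumV n (fun l => (if Nat.eqb l u then q * two_step u u else 0)
                                         + 2 * q^2 * two_step u l)).
  - apply sumV_le. intros l _. pose proof (two_step_nonneg u l). destruct (Nat.eqb_spec l u) as [-> | Hlu].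
    + pose proof (two_step_return u Hu). simpl. nra.
    + pose proof (two_step_other u l Hlu). simpl. nra.
  - rewrite sumV_plus, sumV_delta, sumV_scal by auto.
    pose proof (two_step_return u Hu). pose proof (two_step_total u Hu).
    assert (q * two_step u u <= q * q) by (apply Rmult_le_compat_l; lra).
    assert (2 * q^2 * sumV n (two_step u) <= 2 * q^2 * 1)
      by (apply Rmult_le_compat_l; nra).
    lra.
Qed.

(* Off Gam, V is within q (K + 3/2 + Bs/2) of m: the one-step boundary terms
   contribute at most q K, and by Cauchy-Schwarz (in the form 2ab <= a^2/q + q b^2)
   the two-step terms contribute at most (3 q^2 / q + q Bs) / 2. *)
Lemma two_step_deviation u : (u < n)%nat -> Gam u = false ->
  Rabs (V u - m) <= q * K + q * (3/2) + q * Bs / 2.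
Proof.
  intros Hu Gu. rewrite (two_step_expansion u Hu Gu).
  assert (Hone : Rabs (sumV n (fun j => if adj u j && Gam j then Q u j * (V j - m) else 0)) <= q * K).
  { eapply Rle_trans; [apply sumV_abs |].
    apply Rle_trans with (sumV n (fun j => q * (if Gam j then 1 else 0))).
    - apply sumV_le. intros j Hj. destruct (adj u j) eqn:Aj; simpl;
        [| rewrite Rabs_R0; destruct (Gam j); lra].
      destruct (Gam j); [| rewrite Rabs_R0; lra]. rewrite Rabs_mult.
      destruct (Htrans u j Aj). rewrite (Rabs_pos_eq (Q u j)) by lra.
      specialize (Hdev1 j Hj). pose proof (Rabs_pos (V j - m)). nra.
    - rewrite sumV_scal, <- card_sum. apply Rmult_le_compat_l; lra. }
  assert (Htwo : Rabs (sumV n (fun l => two_step u l * (V l - m))) <= q * (3/2) + q * Bs / 2).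
  { eapply Rle_trans; [apply sumV_abs |].
    apply Rle_trans with (sumV n (fun l => / (2*q) * (two_step u l)^2 + q/2 * (V l - m)^2)).
    - apply sumV_le. intros l _. rewrite Rabs_mult, (Rabs_pos_eq (two_step u l)) by apply two_step_nonneg.
      set (r := two_step u l). set (g := Rabs (V l - m)).
      assert (Hsq : 0 <= (r - q * g)^2 / (2*q))
        by (apply Rmult_le_pos; [apply pow2_ge_0 | left; apply Rinv_0_lt_compat; lra]).
      assert (Hid : (r - q * g)^2 / (2*q) = / (2*q) * r^2 + q/2 * g^2 - r * g) by (field; lra).
      unfold g in *. rewrite <- (pow2_abs (V l - m)). lra.
    - rewrite sumV_plus, !sumV_scal. pose proof (two_step_sq_sum u Hu) as Hsq.
      assert (Hfirst : / (2*q) * sumV n (fun l => two_step u l ^ 2) <= / (2*q) * (3 * q^2))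
        by (apply Rmult_le_compat_l; [left; apply Rinv_0_lt_compat; lra | auto]).
      assert (q/2 * sumV n (fun l => (V l - m) ^ 2) <= q/2 * Bs) by (apply Rmult_le_compat_l; lra).
      replace (/ (2*q) * (3 * q^2)) with (q * (3/2)) in Hfirst by (field; lra). lra. }
  eapply Rle_trans; [apply Rabs_triang | lra].
Qed.

End Two_step_averaging.

Definition boundary (x : nat -> nat) (K : nat) (i : nat) : bool :=
  existsb (fun k => Nat.eqb (x k) i) (seq 0 K).

Lemma boundary_spec x K i : boundary x K i = true <-> exists k, (k < K)%nat /\ x k = i.
Proof.
  unfold boundary. rewrite existsb_exists. split.
  - intros [k [Hk E]]. apply in_seq in Hk. apply Nat.eqb_eq in E. exists k; split; [lia | auto].
  - intros [k [Hk E]]. exists k. split; [apply in_seq; lia | apply Nat.eqb_eq; auto].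
Qed.

Lemma sumV_point n K (x : nat -> nat) (F : nat -> R) :
  (forall k, (k < K)%nat -> (x k < n)%nat) ->
  sumV K (fun k => sumV n (fun i => if Nat.eqb (x k) i then F i else 0)) = sumV K (fun k => F (x k)).
Proof.
  intros Hx. apply sumV_ext. intros k Hk.
  rewrite <- (sumV_delta n (x k) (F (x k))) by auto. apply sumV_ext. intros i _.
  rewrite Nat.eqb_sym. destruct (Nat.eqb_spec i (x k)); subst; auto.
Qed.

Lemma sumV_boundary n x K (F : nat -> R) :
  (forall k, (k < K)%nat -> (x k < n)%nat) ->
  (forall k l, (k < K)%nat -> (l < K)%nat -> x k = x l -> k = l) ->
  sumV n (fun i => if boundary x K i then F i else 0) = sumV K (fun k => F (x k)).
Proof.
  intros Hx Hinj.
  transitivity (sumV n (fun i => sumV K (fun k => if Nat.eqb (x k) i then F i else 0))).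
  - apply sumV_ext. intros i Hi. destruct (boundary x K i) eqn:G.
    + apply boundary_spec in G as [k0 [Hk0 E]].
      transitivity (sumV K (fun k => if Nat.eqb k k0 then F i else 0));
        [symmetry; apply sumV_delta; auto |].
      apply sumV_ext. intros k Hk.
      destruct (Nat.eqb_spec k k0) as [Ek | Ek], (Nat.eqb_spec (x k) i) as [Ex | Ex]; subst; auto.
      * exfalso; auto.
      * exfalso. apply Ek. apply Hinj; auto.
    + symmetry. apply sumV_zero. intros k Hk. destruct (Nat.eqb_spec (x k) i); auto.
      exfalso. assert (boundary x K i = true) by (apply boundary_spec; eauto). congruence.
  - rewrite sumV_swap. apply sumV_point; auto.
Qed.

Lemma card_boundary n x K :
  (forall k, (k < K)%nat -> (x k < n)%nat) ->
  (forall k l, (k < K)%nat -> (l < K)%nat -> x k = x l -> k = l) ->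
  INR (card n (boundary x K)) = INR K.
Proof.
  intros Hx Hinj. rewrite card_sum, (sumV_boundary n x K (fun _ => 1)) by auto.
  rewrite sumV_const. lra.
Qed.

(* The total current entering the network vanishes; if V is harmonic off the
   boundary, the currents at the boundary vertices sum to zero. *)
Lemma boundary_flux_balance n (adj : nat -> nat -> bool) (c : nat -> nat -> R) x K (V : nat -> R) :
  (forall i j, adj i j = adj j i) -> (forall i j, c i j = c j i) ->
  (forall k, (k < K)%nat -> (x k < n)%nat) ->
  (forall k l, (k < K)%nat -> (l < K)%nat -> x k = x l -> k = l) ->
  (forall u, (u < n)%nat -> boundary x K u = false ->
     sumV n (fun j => if adj u j then c u j * (V u - V j) else 0) = 0) ->
  sumV K (fun k => sumV n (fun j => if adj (x k) j then c (x k) j * (V (x k) - V j) else 0)) = 0.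
Proof.
  intros Hsym Hcsym Hx Hinj Hharm.
  set (flux := fun u => sumV n (fun j => if adj u j then c u j * (V u - V j) else 0)).
  change (sumV K (fun k => flux (x k)) = 0).
  rewrite <- (sumV_boundary n x K flux Hx Hinj).
  transitivity (sumV n flux).
  2:{ apply sumV2_antisym. intros u j. rewrite (Hsym j u), (Hcsym j u). destruct (adj u j); ring. }
  apply sumV_ext. intros u Hu. destruct (boundary x K u) eqn:G; auto.
  unfold flux. rewrite Hharm; auto.
Qed.

Lemma ln_le_mono a b : 0 < a -> a <= b -> ln a <= ln b.
Proof. intros Ha Hab. destruct (Req_dec a b) as [-> | Hne]; [lra |]. left. apply ln_increasing; lra. Qed.

(* For l = ln n >= 6400, 4-cycles are short and the distance bound of (P2) is
   positive. *)
Lemma large_log_facts l : 6400 <= l -> 4 <= l / (10 * ln l) /\ 0 < l / ln l.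
Proof.
  intros Hl.
  assert (Hln0 : 0 < ln l) by (rewrite <- ln_1; apply ln_increasing; lra).
  assert (He : l <= exp (l / 40)).
  { replace (l/40) with (l/80 + l/80) by field. rewrite exp_plus.
    assert (H1 := exp_ineq1_le (l/80)). nra. }
  assert (Hln : ln l <= l / 40) by (rewrite <- (ln_exp (l/40)); apply ln_le_mono; lra).
  split.
  - apply (Rmult_le_reg_r (10 * ln l)); [lra |]. unfold Rdiv. rewrite Rmult_assoc, Rinv_l by lra. lra.
  - apply Rdiv_lt_0_compat; lra.
Qed.

Lemma ctot_bounds n adj c C1 C2 u :
  (forall j, adj u j = true -> C1 <= c u j <= C2) ->
  C1 * INR (degree n adj u) <= ctot n adj c u <= C2 * INR (degree n adj u).
Proof.
  intros H. unfold degree, ctot. rewrite card_sum, <- !sumV_scal.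
  split; apply sumV_le; intros j _; destruct (adj u j) eqn:E; try specialize (H j E); lra.
Qed.

(** * The estimate on a proper network *)

Definition cheeger_const (C1 C2 : R) : R := C1 / (6 * C2).

Definition step_const (C1 C2 C delta : R) : R := C2 / (C1 * delta * C).

Definition l2_const (C1 C2 delta : R) (K : nat) : R :=
  128 * INR K * C2 / ((cheeger_const C1 C2)^2 * C1 * delta) + INR K.

Definition deviation_const (C1 C2 C delta : R) (K : nat) : R :=
  step_const C1 C2 C delta * (INR K + 3/2 + l2_const C1 C2 delta K / 2).

Lemma deviation_const_pos C1 C2 C delta K :
  0 < C1 -> C1 <= C2 -> 0 < C -> 0 < delta -> 0 < deviation_const C1 C2 C delta K.
Proof.
  intros HC1 HC12 HC Hd. pose proof (pos_INR K).
  assert (Hh : 0 < cheeger_const C1 C2) by (apply Rdiv_lt_0_compat; lra).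
  assert (Hl2 : 0 <= l2_const C1 C2 delta K).
  { unfold l2_const. assert (0 <= 128 * INR K * C2 / (cheeger_const C1 C2 ^ 2 * C1 * delta)); [| lra].
    apply Rmult_le_pos; [apply Rmult_le_pos; lra |].
    left. apply Rinv_0_lt_compat.
    apply Rmult_lt_0_compat; [apply Rmult_lt_0_compat; [apply pow_lt |] |]; lra. }
  apply Rmult_lt_0_compat; [| lra].
  apply Rdiv_lt_0_compat; [lra | repeat apply Rmult_lt_0_compat; lra].
Qed.

Section Proper_network.
Variables (C1 C2 C delta : R) (K n : nat) (adj : nat -> nat -> bool) (c : nat -> nat -> R).
Variables (x : nat -> nat) (p V : nat -> R).
Hypothesis HC1 : 0 < C1.
Hypothesis HC12 : C1 <= C2.
Hypothesis HK : (1 <= K)%nat.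
Hypothesis HC : 0 < C.
Hypothesis Hdelta : 0 < delta.
Hypothesis Hsimple : simple_graph n adj.
Hypothesis Hconn : connected n adj.
Hypothesis HP2 : forall l1 l2, short_cycle n adj l1 -> short_cycle n adj l2 ->
  distinct_cycles l1 l2 -> cycles_far adj l1 l2 (ln (INR n) / ln (ln (INR n))).
Hypothesis HP4 : P4 n adj C1 C2 K.
Hypothesis HP5 : forall i, (i < n)%nat ->
  delta * C * ln (INR n) < INR (degree n adj i) < 4 * C * ln (INR n).
Hypothesis Hcond : conductance adj C1 C2 c.
Hypothesis Hx : forall k, (k < K)%nat -> (x k < n)%nat.
Hypothesis Hinj : forall k l, (k < K)%nat -> (l < K)%nat -> x k = x l -> k = l.
Hypothesis Hp : forall k, (k < K)%nat -> 0 <= p k <= 1.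
Hypothesis HVx : forall k, (k < K)%nat -> V (x k) = p k.
Hypothesis Hharm : harmonic_off n adj c (fun i => exists k, (k < K)%nat /\ x k = i) V.
(* n is large: lam = ln n is large, and degrees exceed twice the boundary size *)
Hypothesis Hlarge : 6400 <= ln (INR n).
Hypothesis Hdeg_large : 2 * INR K <= delta * C * ln (INR n).

Local Notation lam := (ln (INR n)).
Local Notation Gam := (boundary x K).
Local Notation h := (cheeger_const C1 C2).

Lemma h_pos : 0 < h.
Proof. unfold cheeger_const. apply Rdiv_lt_0_compat; lra. Qed.

Lemma cond_pos : forall u j, adj u j = true -> 0 < c u j.
Proof. intros u j A. destruct Hcond as [_ Hb]. specialize (Hb u j A). lra. Qed.

Lemma cond_nonneg : forall u j, adj u j = true -> 0 <= c u j.
Proof. intros u j A. left. apply cond_pos, A. Qed.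

Lemma harmonic_off_boundary : forall u, (u < n)%nat -> Gam u = false ->
  sumV n (fun j => if adj u j then c u j * (V u - V j) else 0) = 0.
Proof.
  intros u Hu Gu. apply Hharm; auto. intros Hex. apply boundary_spec in Hex. congruence.
Qed.

Lemma ctot_range u : (u < n)%nat ->
  C1 * delta * C * lam < ctot n adj c u <= 4 * C2 * C * lam.
Proof.
  intros Hu. destruct Hcond as [_ Hb].
  destruct (ctot_bounds n adj c C1 C2 u (Hb u)). destruct (HP5 u Hu). split; nra.
Qed.

Lemma ctot_pos u : (u < n)%nat -> 0 < ctot n adj c u.
Proof.
  intros Hu. destruct (ctot_range u Hu) as [Hlow _].
  assert (0 < C1 * delta * C * lam) by (repeat apply Rmult_lt_0_compat; lra). lra.
Qed.

Lemma transition_small u j : adj u j = true ->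
  0 <= transition n adj c u j <= step_const C1 C2 C delta / lam.
Proof.
  intros A. destruct Hsimple as [_ [_ Hrange]]. destruct (Hrange u j A) as [Hu _].
  destruct (ctot_range u Hu) as [Hl _]. destruct Hcond as [_ Hb]. specialize (Hb u j A).
  assert (Hp0 : 0 < C1 * delta * C * lam) by (repeat apply Rmult_lt_0_compat; lra).
  unfold transition. split; [apply Rlt_le, Rdiv_lt_0_compat; lra |].
  apply Rle_trans with (C2 / (C1 * delta * C * lam)).
  - unfold Rdiv. apply Rmult_le_compat; try lra.
    + left; apply Rinv_0_lt_compat; lra.
    + apply Rinv_le_contravar; lra.
  - unfold step_const. right. field. repeat split; lra.
Qed.

Lemma boundary_value u : Gam u = true -> 0 <= V u <= 1.
Proof. intros G. apply boundary_spec in G as [k [Hk <-]]. rewrite HVx by auto. apply Hp; auto. Qed.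

(* Maximum principle, applied to V and to -V. *)
Lemma potential_unit j : (j < n)%nat -> 0 <= V j <= 1.
Proof.
  intros Hj. assert (Hx0 : (x 0%nat < n)%nat) by (apply Hx; lia).
  assert (HGx0 : Gam (x 0%nat) = true) by (apply boundary_spec; exists 0%nat; split; [lia | auto]).
  split.
  - cut (- V j <= 0); [lra |].
    apply (max_principle n adj c Gam (fun j => - V j) 0 (x 0%nat) Hsimple Hconn cond_pos Hx0 HGx0);
      auto.
    + intros u _ G. pose proof (boundary_value u G). lra.
    + intros u Hu G. rewrite (sumV_ext n _ (fun j => -1 * (if adj u j then c u j * (V u - V j) else 0)))
        by (intros i _; destruct (adj u i); ring).
      rewrite sumV_scal, harmonic_off_boundary by auto. ring.
  - apply (max_principle n adj c Gam V 1 (x 0%nat) Hsimple Hconn cond_pos Hx0 HGx0); auto.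
    + intros u _ G. apply boundary_value, G.
    + exact harmonic_off_boundary.
Qed.

Lemma expands_off_boundary : expands n adj c Gam h.
Proof.
  intros S HS Hhalf.
  assert (Hcut0 : 0 <= cut_weight n adj c Gam S).
  { apply sumV_nonneg. intros u _. destruct (S u); [| lra]. apply sumV_nonneg. intros j _.
    destruct (adj u j) eqn:A; simpl; [| lra]. destruct (_ && _); [apply cond_nonneg; auto | lra]. }
  destruct (classic (exists i, S i = true)) as [Ex | NEx].
  - assert (HL : forall i, Gam i = true -> (i < n)%nat).
    { intros u G. apply boundary_spec in G as [k [Hk <-]]. auto. }
    assert (HcK : (card n Gam <= K)%nat)
      by (apply INR_le; rewrite card_boundary by auto; lra).
    specialize (HP4 c Gam S Hcond HL HcK HS Ex Hhalf). cbv zeta in HP4.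
    change (cut_weight n adj c Gam S / volume n adj c Gam S >= h) in HP4.
    destruct (Req_dec (volume n adj c Gam S) 0) as [E | NE]; [rewrite E; lra |].
    assert (Hv : 0 < volume n adj c Gam S).
    { destruct (Rle_dec (volume n adj c Gam S) 0); [| lra]. exfalso.
      assert (0 <= volume n adj c Gam S); [| lra].
      apply sumV_nonneg. intros u _. destruct (S u); [| lra]. apply sumV_nonneg. intros j _.
      destruct (adj u j) eqn:A; simpl; [| lra]. destruct (negb _); [apply cond_nonneg; auto | lra]. }
    apply Rge_le in HP4. apply (Rmult_le_compat_r (volume n adj c Gam S)) in HP4; [| lra].
    unfold Rdiv in HP4. rewrite Rmult_assoc, Rinv_l in HP4 by lra. lra.
  - replace (volume n adj c Gam S) with 0; [lra |].
    symmetry. apply sumV_zero. intros u _. destruct (S u) eqn:E; auto. exfalso; eauto.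
Qed.

(* The energy of V is O(lam): compare with V restricted to the boundary. *)
Lemma energy_bound : energy n adj c V <= 8 * INR K * C2 * C * lam.
Proof.
  destruct Hsimple as [Hsym _]. destruct Hcond as [Hcsym _].
  set (W := fun j => if Gam j then V j else 0).
  assert (HVW : energy n adj c V <= energy n adj c W).
  { apply (dirichlet_principle n adj c Gam V W Hsym Hcsym cond_nonneg harmonic_off_boundary).
    intros u _ G. unfold W. rewrite G. auto. }
  assert (HW : energy n adj c W <= 2 * sumV n (fun u => if Gam u then ctot n adj c u else 0)).
  { apply energy_supported_le; auto; [exact cond_nonneg | |]; intros u G; unfold W; rewrite G;
      [apply boundary_value, G | auto]. }
  assert (Hbd : sumV n (fun u => if Gam u then ctot n adj c u else 0) <= 4 * C2 * C * lam * INR K).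
  { rewrite <- (card_boundary n x K Hx Hinj), card_sum, <- sumV_scal. apply sumV_le. intros u Hu.
    destruct (Gam u); [destruct (ctot_range u Hu); lra | lra]. }
  lra.
Qed.

Lemma out_degree_large u : outside n Gam u = true ->
  C1 * delta * C * lam / 2 <= out_degree n adj c Gam u.
Proof.
  intros Gu. apply outside_spec in Gu as [Hu _]. destruct Hcond as [_ Hb].
  apply Rle_trans with (C1 * (INR (degree n adj u) - INR (card n Gam))).
  - rewrite card_boundary by auto. destruct (HP5 u Hu). nra.
  - unfold degree. rewrite !card_sum, <- sumV_minus, <- sumV_scal. apply sumV_le. intros j _.
    destruct (adj u j) eqn:A, (Gam j); simpl; try lra. specialize (Hb _ _ A). lra.
Qed.

(* Around a suitable m in [0,1] the squared deviations of V sum to O(1):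
   the Poincare inequality bounds the degree-weighted sum by O(lam), and
   each weight is at least of order lam. *)
Lemma l2_deviation : exists m, 0 <= m <= 1 /\
  sumV n (fun l => (V l - m)^2) <= l2_const C1 C2 delta K.
Proof.
  destruct Hsimple as [Hsym [_ Hrange]]. destruct Hcond as [Hcsym _].
  destruct (l2_deviation_bound n adj c Gam h V Hrange Hsym Hcsym cond_nonneg h_pos
              expands_off_boundary) as [m [Hm Hl2]].
  assert (Hm01 : 0 <= m <= 1).
  { destruct Hm as [-> | [i0 [Hi0 [_ ->]]]]; [lra | apply potential_unit; auto]. }
  exists m. split; auto.
  pose proof h_pos.
  set (k0 := 2 / (C1 * delta * C * lam)).
  assert (Hk0 : 0 < k0) by (apply Rdiv_lt_0_compat; [lra | repeat apply Rmult_lt_0_compat; lra]).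
  apply Rle_trans with
    (k0 * sumV n (fun i => if outside n Gam i then (V i - m)^2 * out_degree n adj c Gam i else 0)
     + sumV n (fun l => if Gam l then 1 else 0)).
  - rewrite <- sumV_scal, <- sumV_plus. apply sumV_le. intros l Hl.
    pose proof (potential_unit l Hl). unfold outside.
    rewrite (proj2 (Nat.ltb_lt l n) Hl). destruct (Gam l) eqn:G; simpl; [nra |].
    assert (HW : C1 * delta * C * lam / 2 <= out_degree n adj c Gam l)
      by (apply out_degree_large, outside_spec; auto).
    assert (1 <= k0 * out_degree n adj c Gam l).
    { apply Rle_trans with (k0 * (C1 * delta * C * lam / 2)).
      - unfold k0. right. field. repeat split; lra.
      - apply Rmult_le_compat_l; lra. }
    assert (0 <= (V l - m)^2) by apply pow2_ge_0. nra.
  - rewrite <- card_sum, card_boundary by auto.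
    assert (Hen : inner_energy n adj c Gam V <= 8 * INR K * C2 * C * lam)
      by (eapply Rle_trans; [apply inner_energy_le_energy, cond_nonneg | apply energy_bound]).
    assert (k0 * sumV n (fun i => if outside n Gam i then (V i - m)^2 * out_degree n adj c Gam i else 0)
            <= k0 * (8 / h^2 * (8 * INR K * C2 * C * lam))).
    { apply Rmult_le_compat_l; [lra |]. eapply Rle_trans; [apply Hl2 |].
      apply Rmult_le_compat_l; [apply Rlt_le, Rdiv_lt_0_compat; [lra | nra] | lra]. }
    assert (k0 * (8 / h^2 * (8 * INR K * C2 * C * lam)) = l2_const C1 C2 delta K - INR K).
    { unfold k0, l2_const. field. repeat split; try lra; nra. }
    lra.
Qed.

Lemma deviation_off_boundary : exists m, 0 <= m <= 1 /\
  forall u, (u < n)%nat -> Gam u = false -> Rabs (V u - m) <= deviation_const C1 C2 C delta K / lam.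
Proof.
  destruct (l2_deviation) as [m [Hm Hl2]]. exists m. split; auto.
  destruct Hsimple as [_ [_ Hrange]].
  destruct (large_log_facts lam Hlarge) as [Hshort Hfar].
  set (q := step_const C1 C2 C delta / lam).
  assert (Hq : 0 < q).
  { apply Rdiv_lt_0_compat; [unfold step_const; apply Rdiv_lt_0_compat | ];
      [lra | repeat apply Rmult_lt_0_compat; lra | lra]. }
  intros u Hu Gu.
  eapply Rle_trans.
  - apply (two_step_deviation n adj c Gam V m q (INR K) (l2_const C1 C2 delta K)); auto.
    + exact harmonic_off_boundary.
    + exact ctot_pos.
    + exact transition_small.
    + intros j Hj. pose proof (potential_unit j Hj). apply Rabs_le. lra.
    + rewrite card_boundary by auto. lra.
    + exact (common_neighbours_le_2 n adj Hsimple HP2 Hshort Hfar).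
  - right. unfold q, deviation_const. field. lra.
Qed.

(* If V is within beta of m off the boundary, then the conductance-weighted
   deviation of the neighbours of u from m is at most beta c_u + C2 K: the
   at most K boundary neighbours deviate by at most 1. *)
Lemma neighbour_deviation m beta u : 0 <= m <= 1 -> 0 <= beta ->
  (forall v, (v < n)%nat -> Gam v = false -> Rabs (V v - m) <= beta) ->
  Rabs (sumV n (fun j => if adj u j then c u j * (V j - m) else 0))
  <= beta * ctot n adj c u + C2 * INR K.
Proof.
  intros Hm Hbeta Hdev. destruct Hcond as [_ Hb].
  eapply Rle_trans; [apply sumV_abs |].
  apply Rle_trans with
    (sumV n (fun j => beta * (if adj u j then c u j else 0) + C2 * (if Gam j then 1 else 0))).
  - apply sumV_le. intros j Hj. destruct (adj u j) eqn:A; [| rewrite Rabs_R0; destruct (Gam j); lra].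
    rewrite Rabs_mult, (Rabs_pos_eq (c u j)) by (apply cond_nonneg; auto).
    specialize (Hb _ _ A). pose proof (Rabs_pos (V j - m)). destruct (Gam j) eqn:G.
    + pose proof (potential_unit j Hj). assert (Rabs (V j - m) <= 1) by (apply Rabs_le; lra). nra.
    + specialize (Hdev j Hj G). nra.
  - rewrite sumV_plus, !sumV_scal, <- card_sum, card_boundary by auto. fold (ctot n adj c u). lra.
Qed.

(* Expanding the vanishing boundary current: at x_k the current is
   c_(x_k) (p_k - m) minus the neighbour term above. *)
Lemma boundary_current_identity m :
  sumK K (fun k => p k * ctot n adj c (x k)) - m * sumK K (fun k => ctot n adj c (x k))
  = sumV K (fun k => sumV n (fun j => if adj (x k) j then c (x k) j * (V j - m) else 0)).
Proof.
  destruct Hsimple as [Hsym _]. destruct Hcond as [Hcsym _].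
  pose proof (boundary_flux_balance n adj c x K V Hsym Hcsym Hx Hinj harmonic_off_boundary) as Hbal.
  change (sumK K ?f) with (sumV K f). rewrite <- sumV_scal, <- sumV_minus.
  rewrite (sumV_ext K _ (fun k =>
             sumV n (fun j => if adj (x k) j then c (x k) j * (V j - m) else 0)
             + sumV n (fun j => if adj (x k) j then c (x k) j * (V (x k) - V j) else 0))).
  - rewrite sumV_plus, Hbal. ring.
  - intros k Hk. unfold ctot. rewrite <- (HVx k Hk), <- !sumV_scal, <- sumV_minus, <- sumV_plus.
    apply sumV_ext. intros j _. destruct (adj (x k) j); ring.
Qed.

(* Hence m is within beta + C2 K^2 / (C1 delta C lam) of the weighted average of
   the boundary potentials, since every c_u exceeds C1 delta C lam. *)
Lemma median_near_average m :
  (forall u, (u < n)%nat -> Gam u = false -> Rabs (V u - m) <= deviation_const C1 C2 C delta K / lam) ->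
  0 <= m <= 1 ->
  Rabs (m - sumK K (fun k => p k * ctot n adj c (x k)) / sumK K (fun k => ctot n adj c (x k)))
  <= deviation_const C1 C2 C delta K / lam + INR K ^ 2 * step_const C1 C2 C delta / lam.
Proof.
  intros Hdev Hm.
  assert (Hpos : 0 < C1 * delta * C * lam) by (repeat apply Rmult_lt_0_compat; lra).
  set (beta := deviation_const C1 C2 C delta K / lam) in *.
  assert (Hbeta : 0 <= beta) by (apply Rlt_le, Rdiv_lt_0_compat; [apply deviation_const_pos |]; lra).
  set (S1 := sumK K (fun k => p k * ctot n adj c (x k))).
  set (S2 := sumK K (fun k => ctot n adj c (x k))).
  assert (HS2 : C1 * delta * C * lam < S2).
  { unfold S2. change (sumK K ?f) with (sumV K f).
    apply Rlt_le_trans with (ctot n adj c (x 0%nat)); [apply ctot_range; apply Hx; lia |].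
    apply (sumV_ge_term K (fun k => ctot n adj c (x k)) 0%nat); [| lia].
    intros k Hk. left. apply ctot_pos, Hx, Hk. }
  assert (Hsum : Rabs (S1 - m * S2) <= beta * S2 + C2 * INR K * INR K).
  { rewrite boundary_current_identity. eapply Rle_trans; [apply sumV_abs |].
    apply Rle_trans with (sumV K (fun k => beta * ctot n adj c (x k) + C2 * INR K)).
    - apply sumV_le. intros k Hk. apply neighbour_deviation; auto.
    - rewrite sumV_plus, sumV_scal, sumV_const. unfold S2. change (sumK K ?f) with (sumV K f). lra. }
  replace (m - S1 / S2) with (- (S1 - m * S2) / S2) by (field; lra).
  unfold Rdiv. rewrite Rabs_mult, Rabs_Ropp, (Rabs_pos_eq (/ S2)) by (left; apply Rinv_0_lt_compat; lra).
  apply Rle_trans with ((beta * S2 + C2 * INR K * INR K) * / S2);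
    [apply Rmult_le_compat_r; [left; apply Rinv_0_lt_compat; lra | auto] |].
  rewrite Rmult_plus_distr_r. replace (beta * S2 * / S2) with beta by (field; lra).
  apply Rplus_le_compat_l.
  apply Rle_trans with (C2 * INR K * INR K * / (C1 * delta * C * lam)).
  - apply Rmult_le_compat_l; [pose proof (pos_INR K); nra | apply Rinv_le_contravar; lra].
  - right. unfold step_const. field. repeat split; lra.
Qed.

End Proper_network.

Lemma log_threshold (K : nat) (C delta : R) : 0 < C -> 0 < delta ->
  exists n0 : nat, forall n, (n0 <= n)%nat ->
    6400 <= ln (INR n) /\ 2 * INR K <= delta * C * ln (INR n).
Proof.
  intros HC Hd. set (T := 6400 + 2 * INR K / (delta * C)).
  destruct (INR_archimed 1 (exp T)) as [N HN]; [lra |]. exists N. intros n Hn.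
  assert (HT : 0 <= 2 * INR K / (delta * C)).
  { pose proof (pos_INR K). apply Rmult_le_pos; [lra |].
    left. apply Rinv_0_lt_compat, Rmult_lt_0_compat; lra. }
  assert (Hlam : T <= ln (INR n)).
  { rewrite <- (ln_exp T). apply ln_le_mono; [apply exp_pos |]. apply le_INR in Hn. lra. }
  unfold T in Hlam. split; [lra |].
  replace (2 * INR K) with (delta * C * (2 * INR K / (delta * C))) by (field; lra).
  apply Rmult_le_compat_l; [nra | lra].
Qed.

Theorem theorem3p1 :
  forall (C1 C2 : R) (K : nat) (C delta : R),
    0 < C1 -> C1 <= C2 -> (1 <= K)%nat -> 0 < C -> 0 < delta ->
    exists (M : R) (n0 : nat),
      forall (n : nat) (adj : nat -> nat -> bool),
        (n0 <= n)%nat ->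
        proper n adj C1 C2 K C delta ->
        forall (c : nat -> nat -> R) (x : nat -> nat) (p : nat -> R) (V : nat -> R),
          conductance adj C1 C2 c ->
          (forall k, (k < K)%nat -> (x k < n)%nat) ->
          (forall k l, (k < K)%nat -> (l < K)%nat -> x k = x l -> k = l) ->
          (forall k, (k < K)%nat -> 0 <= p k <= 1) ->
          (forall k, (k < K)%nat -> V (x k) = p k) ->
          harmonic_off n adj c (fun i => exists k, (k < K)%nat /\ x k = i) V ->
          forall i, (i < n)%nat -> ~ (exists k, (k < K)%nat /\ x k = i) ->
            Rabs (V i - sumK K (fun k => p k * ctot n adj c (x k)) /
                        sumK K (fun k => ctot n adj c (x k)))
              <= M / ln (INR n).
Proof.
  intros C1 C2 K C delta HC1 HC12 HK HC Hd.
  destruct (log_threshold K C delta HC Hd) as [N HN].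
  exists (2 * deviation_const C1 C2 C delta K + INR K ^ 2 * step_const C1 C2 C delta), N.
  intros n adj Hn Hprop c x p V Hcond Hx Hinj Hp HVx Hharm i Hi HiG.
  destruct (HN n Hn) as [Hlarge Hdeg_large].
  destruct Hprop as [Hsimple [Hconn [HP2 [_ [HP4 HP5]]]]].
  destruct (deviation_off_boundary C1 C2 C delta K n adj c x p V) as [m [Hm Hdev]]; auto.
  assert (HiG' : boundary x K i = false)
    by (apply not_true_iff_false; intros Hb; apply HiG, boundary_spec, Hb).
  assert (Hvi := Hdev i Hi HiG').
  assert (Hmid : Rabs (m - sumK K (fun k => p k * ctot n adj c (x k)) / sumK K (fun k => ctot n adj c (x k)))
                 <= deviation_const C1 C2 C delta K / ln (INR n)
                    + INR K ^ 2 * step_const C1 C2 C delta / ln (INR n))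
    by (eapply median_near_average; eauto).
  match goal with |- Rabs (V i - ?avg) <= _ => replace (V i - avg) with ((V i - m) + (m - avg)) by ring end.
  eapply Rle_trans; [apply Rabs_triang |].
  unfold Rdiv in *. rewrite !Rmult_plus_distr_r. lra.
Qed.
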